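(* Let $0<\rho_-<\rho_+<1$, $\varphi_\pm=\log\frac{\rho_\pm}{1-\rho_\pm}$ and $\varphi_0=\max\{|\varphi_-|,|\varphi_+|\}$. Then the bottom and the top of the energy band of the competitive TASEP are $$E^-_{+\infty}=-\bar V^+-\log(1+e^{\varphi_0}),$$ $$E^+_{+\infty}=-\bar V^+ +\begin{cases}\dfrac{\varphi_-\log(1+e^{\varphi_+})-\varphi_+\log(1+e^{\varphi_-})}{\varphi_+-\varphi_-}, & \rho_-\le \tfrac12\le \rho_+,\\[2mm] -\log(1+e^{\varphi_+}), & \rho_-<\rho_+\le \tfrac12,\\[1mm] -\log(1+e^{-\varphi_-}), & \tfrac12\le \rho_-<\rho_+.\end{cases}$$
   Context: Let $s(\theta)=\theta\log\theta+(1-\theta)\log(1-\theta)$ for $\theta\in[0,1]$ (with $0\log 0=0$) and $\chi(\rho)=\rho(1-\rho)$. Let $\mathcal M$ be the set of measurable functions $\rho:[-1,1]\to[0,1]$ (a subset of $L^\infty([-1,1])$ with the weak-$*$ topology). For $\rho\in\mathcal M$ let $\mathbb S(\rho)=-\frac12\int_{-1}^1 s(\rho(x))\,dx$, and for a measurable $\varphi:[-1,1]\to\mathbb R$ let $\mathcal H(\rho,\varphi)=\frac12\int_{-1}^1\big[(1-\rho(x))\varphi(x)-\log(1+e^{\varphi(x)})\big]dx$. Let $\Phi=\{\varphi_y=\varphi_-\mathbf 1_{[-1,y)}+\varphi_+\mathbf 1_{[y,1]}:\ y\in[-1,1]\}$. Set $\bar V^+=\log\big(\min_{\rho\in[\rho_-,\rho_+]}\chi(\rho)\big)$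 and define the quasi-potential of the competitive TASEP by $V^+(\rho)=-\mathbb S(\rho)+\inf_{\varphi\in\Phi}\mathcal H(\rho,\varphi)-\bar V^+$. The bottom and top of the energy band are $E^-_{+\infty}=\inf_{\rho\in\mathcal M}\{\mathbb S(\rho)+V^+(\rho)\}$ and $E^+_{+\infty}=\sup_{\rho\in\mathcal M}\{\mathbb S(\rho)+V^+(\rho)\}$. *)

From HB Require Import structures.
From mathcomp Require Import all_boot all_order all_algebra.
From mathcomp Require Import all_classical all_reals all_analysis.
Set Implicit Arguments. Unset Strict Implicit. Unset Printing Implicit Defensive.
Import Order.TTheory GRing.Theory Num.Theory.
Import numFieldNormedType.Exports.
Local Open Scope classical_set_scope.
Local Open Scope ring_scope.

Section CompetitiveTASEP.
Variable R : realType.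

Definition I11 : set R := `[(-1)%R, 1%R].

Definition xlogx (t : R) : R := if t == 0 then 0 else t * ln t.

Definition s_ent (t : R) : R := xlogx t + xlogx (1 - t).

Definition chi (r : R) : R := r * (1 - r).

Definition Mset : set (R -> R) :=
  [set rho : R -> R | measurable_fun I11 rho /\ (forall x, I11 x -> 0 <= rho x <= 1)].

Definition S_ent (rho : R -> R) : R :=
  - (1 / 2) * Rintegral lebesgue_measure I11 (fun x => s_ent (rho x)).

Definition H_fun (rho phi : R -> R) : R :=
  (1 / 2) * Rintegral lebesgue_measure I11
    (fun x => (1 - rho x) * phi x - ln (1 + expR (phi x))).

Definition phi_of (r : R) : R := ln (r / (1 - r)).

Definition phi_y (rm rp y : R) : R -> R :=
  fun x => if x < y then phi_of rm else phi_of rp.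

Definition Vbar (rm rp : R) : R :=
  ln (inf [set chi r | r in `[rm, rp]]).

Definition Vplus (rm rp : R) (rho : R -> R) : R :=
  - S_ent rho + inf [set H_fun rho (phi_y rm rp y) | y in I11] - Vbar rm rp.

Definition E_minus (rm rp : R) : R :=
  inf [set S_ent rho + Vplus rm rp rho | rho in Mset].
Definition E_plus (rm rp : R) : R :=
  sup [set S_ent rho + Vplus rm rp rho | rho in Mset].

End CompetitiveTASEP.

(* Since V^+ contains -S, the energy S + V^+ of a profile rho is
   inf_y H(rho, phi_y) - Vbar.  For 0 <= rho <= 1 the integrand
   (1 - rho) phi - log (1 + e^phi) is at least -log (1 + e^|phi|), with
   equality for rho = 1 or rho = 0 according to the sign of phi: this gives the
   bottom of the band, attained by a constant profile and y = +-1.  For the top,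
   y = -1 and y = 1 bound inf_y H by the affine functions
   m phi_+ - log (1 + e^phi_+) and m phi_- - log (1 + e^phi_-) of the mean
   vacancy density m in [0, 1]; the maximum over m of their minimum is the
   claimed value, and the constant profile with the maximizing m attains it,
   since its integrand is then at least that value for both phi_- and phi_+. *)

From HB Require Import structures.
From mathcomp Require Import all_boot all_order all_algebra.
From mathcomp Require Import all_classical all_reals all_analysis.
From mathcomp Require Import ring lra measurable_realfun.
Set Implicit Arguments. Unset Strict Implicit. Unset Printing Implicit Defensive.
Import Order.TTheory GRing.Theory Num.Theory.
Import numFieldNormedType.Exports.
Local Open Scope classical_set_scope.
Local Open Scope ring_scope.

Section IntegralsOnI11.
Variable R : realType.
Local Notation mu := (@lebesgue_measure R).
Local Notation I11 := (@I11 R).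

Lemma measurable_I11 : @measurable _ (measurableTypeR R) I11.
Proof. exact: measurable_itv. Qed.

Lemma I11_N1 : I11 (-1).
Proof. by rewrite /I11 /= in_itv /=; apply/andP; split; lra. Qed.

Lemma I11_1 : I11 1.
Proof. by rewrite /I11 /= in_itv /=; apply/andP; split; lra. Qed.

Lemma lebesgue_measure_I11 : mu I11 = 2%:E.
Proof.
rewrite /I11 lebesgue_measure_itv /= ifT; last by rewrite lte_fin; lra.
by rewrite -EFinB; congr EFin; lra.
Qed.

Lemma integrable_I11_bounded (f : R -> R) (M : R) : measurable_fun I11 f ->
  (forall x, I11 x -> `|f x| <= M) -> mu.-integrable I11 (EFin \o f).
Proof.
move=> mf fM; apply: measurable_bounded_integrable => //.
- exact: measurable_I11.
- by rewrite [X in (X < _)%E]lebesgue_measure_I11 ltry.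
- exists M; split; first exact: num_real.
  by move=> r Mr x Ix; apply: le_trans (fM x Ix) (ltW Mr).
Qed.

Lemma integrable_I11_cst (c : R) : mu.-integrable I11 (EFin \o fun=> c).
Proof. by apply: (@integrable_I11_bounded _ `|c|) => //; exact: measurable_cst. Qed.

Lemma Rintegral_I11_cst (c : R) : Rintegral mu I11 (fun=> c) = c * 2.
Proof.
rewrite Rintegral_cst; last exact: measurable_I11.
by rewrite [X in fine X]lebesgue_measure_I11.
Qed.

Lemma Rintegral_I11_ge (f : R -> R) (c : R) : mu.-integrable I11 (EFin \o f) ->
  (forall x, I11 x -> c <= f x) -> c * 2 <= Rintegral mu I11 f.
Proof.
move=> If cf; rewrite -Rintegral_I11_cst.
by apply: le_Rintegral => //; [exact: measurable_I11 | exact: integrable_I11_cst].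
Qed.

Lemma Rintegral_I11_le (f : R -> R) (c : R) : mu.-integrable I11 (EFin \o f) ->
  (forall x, I11 x -> f x <= c) -> Rintegral mu I11 f <= c * 2.
Proof.
move=> If fc; rewrite -Rintegral_I11_cst.
by apply: le_Rintegral => //; [exact: measurable_I11 | exact: integrable_I11_cst].
Qed.

Lemma eq_Rintegral_I11_co (f g : R -> R) :
  mu.-integrable I11 (EFin \o f) -> mu.-integrable I11 (EFin \o g) ->
  {in `[(-1 : R), 1[, f =1 g} -> Rintegral mu I11 f = Rintegral mu I11 g.
Proof.
move=> If Ig fg.
have sub : `[(-1 : R), 1[ `<=` I11.
  by move=> x; rewrite /I11 /= !in_itv /= => /andP[-> /ltW ->].
have mJ : measurable `[(-1 : R), 1[ by exact: measurable_itv.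
rewrite /I11 -(Rintegral_itv_bndo_bndc (integrableS measurable_I11 mJ sub If)).
rewrite -(Rintegral_itv_bndo_bndc (integrableS measurable_I11 mJ sub Ig)).
by apply: eq_Rintegral => x; rewrite inE => /fg.
Qed.

End IntegralsOnI11.

Section CompetitiveTASEPEnergy.
Variable R : realType.
Local Notation mu := (@lebesgue_measure R).
Local Notation I11 := (@I11 R).

Definition softplus (t : R) : R := ln (1 + expR t).

Lemma softplus_ge0 (t : R) : 0 <= softplus t.
Proof. by rewrite /softplus ln_ge0 // lerDl expR_ge0. Qed.

Lemma softplus_le : {homo softplus : x y / x <= y}.
Proof.
move=> x y xy; rewrite /softplus ler_ln ?posrE ?addr_gt0 ?expR_gt0 //.
by rewrite lerD2l ler_expR.
Qed.

Lemma softplusN (t : R) : softplus t = t + softplus (- t).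
Proof.
rewrite /softplus -{2}(expRK t) -lnM ?posrE ?addr_gt0 ?expR_gt0 //.
by rewrite mulrDr mulr1 expRxMexpNx_1 addrC.
Qed.

Lemma measurable_phi_y (a b y : R) : measurable_fun I11 (phi_y a b y).
Proof.
apply: measurable_fun_if => //; first exact: measurable_I11.
by apply: measurable_fun_ltr; [exact: measurable_id | exact: measurable_cst].
Qed.

Lemma phi_y_norm_le (a b y x : R) :
  `|phi_y a b y x| <= `|phi_of a| + `|phi_of b|.
Proof. by rewrite /phi_y; case: ifP => _; [rewrite lerDl | rewrite lerDr]. Qed.

Lemma measurable_H_integrand (rho phi : R -> R) :
  measurable_fun I11 rho -> measurable_fun I11 phi ->
  measurable_fun I11 (fun x => (1 - rho x) * phi x - ln (1 + expR (phi x))).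
Proof.
move=> mrho mphi; apply: measurable_funB.
  by apply: measurable_funM => //; apply: measurable_funB.
change (measurable_fun I11 (@ln R \o fun x => 1 + expR (phi x))).
apply: measurableT_comp; first exact: measurable_ln.
apply: measurable_funD => //.
by change (measurable_fun I11 (expR \o phi)); exact: measurableT_comp.
Qed.

Lemma integrable_H_integrand (rho phi : R -> R) (M : R) : Mset rho ->
  measurable_fun I11 phi -> (forall x, I11 x -> `|phi x| <= M) ->
  mu.-integrable I11
    (EFin \o fun x => (1 - rho x) * phi x - ln (1 + expR (phi x))).
Proof.
move=> [mrho rho01] mphi phiM.
apply: (@integrable_I11_bounded _ _ (M + softplus M)).
  exact: measurable_H_integrand.
move=> x Ix; have /andP[r0 r1] := rho01 x Ix; have pM := phiM x Ix.
have spM : softplus (phi x) <= softplus M.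
  by apply: softplus_le; apply: le_trans pM; exact: ler_norm.
apply: (le_trans (ler_normB _ _)); apply: lerD.
  rewrite normrM ger0_norm; last lra.
  by apply: le_trans pM; apply: ler_piMl => //; lra.
by rewrite ger0_norm // softplus_ge0.
Qed.

Lemma integrable_I11_vacancy (rho : R -> R) : Mset rho ->
  mu.-integrable I11 (EFin \o fun x => 1 - rho x).
Proof.
move=> [mrho rho01]; apply: (@integrable_I11_bounded _ _ 1).
  exact: measurable_funB.
by move=> x /rho01 /andP[r0 r1]; rewrite ger0_norm; lra.
Qed.

Definition vacancy_density (rho : R -> R) : R :=
  (1 / 2) * Rintegral mu I11 (fun x => 1 - rho x).

Lemma vacancy_density_ge0_le1 (rho : R -> R) : Mset rho ->
  0 <= vacancy_density rho <= 1.
Proof.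
move=> Mrho; have Iv := integrable_I11_vacancy Mrho; case: Mrho => _ rho01.
have ge0 : 0 * 2 <= Rintegral mu I11 (fun x => 1 - rho x).
  by apply: Rintegral_I11_ge Iv _ => x /rho01; lra.
have le1 : Rintegral mu I11 (fun x => 1 - rho x) <= 1 * 2.
  by apply: Rintegral_I11_le Iv _ => x /rho01; lra.
by rewrite /vacancy_density; apply/andP; split; lra.
Qed.

Lemma Mset_cst (c : R) : 0 <= c <= 1 -> Mset (fun=> c).
Proof. by move=> c01; split; [exact: measurable_cst | move=> x _]. Qed.

Lemma vacancy_density_cst (c : R) : vacancy_density (fun=> c) = 1 - c.
Proof. by rewrite /vacancy_density Rintegral_I11_cst; field. Qed.

Lemma H_fun_cst (rho : R -> R) (c : R) : Mset rho ->
  H_fun rho (fun=> c) = vacancy_density rho * c - softplus c.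
Proof.
move=> Mrho; have Iv := integrable_I11_vacancy Mrho.
have Ivc : mu.-integrable I11 (EFin \o fun x => (1 - rho x) * c).
  apply: (@integrable_I11_bounded _ _ `|c|).
    case: Mrho => mrho _.
    by apply: measurable_funM => //; exact: measurable_funB.
  move=> x Ix; case: Mrho => _ /(_ x Ix) /andP[r0 r1].
  rewrite normrM ger0_norm; last lra.
  by apply: ler_piMl; [exact: normr_ge0 | lra].
rewrite /H_fun (@RintegralB _ _ _ mu I11 (fun x => (1 - rho x) * c) (fun=> _));
  [|exact: measurable_I11|exact: Ivc|exact: integrable_I11_cst].
rewrite (@RintegralZr _ _ _ mu I11 (fun x => 1 - rho x)) //;
  last exact: measurable_I11.
by rewrite Rintegral_I11_cst /vacancy_density /softplus; field.
Qed.

Lemma H_fun_phi_y_left (rho : R -> R) (a b : R) :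
  H_fun rho (phi_y a b (-1)) = H_fun rho (fun=> phi_of b).
Proof.
congr (_ * _); apply: eq_Rintegral => x.
rewrite inE /I11 /= in_itv /= => /andP[x_ge _].
by rewrite /phi_y ltNge x_ge.
Qed.

Lemma H_fun_phi_y_right (rho : R -> R) (a b : R) : Mset rho ->
  H_fun rho (phi_y a b 1) = H_fun rho (fun=> phi_of a).
Proof.
move=> Mrho; congr (_ * _); apply: eq_Rintegral_I11_co.
- exact: integrable_H_integrand Mrho (measurable_phi_y a b 1)
    (fun x _ => phi_y_norm_le a b 1 x).
- exact: (integrable_H_integrand (M := `|phi_of a|) Mrho (measurable_cst _)).
- by move=> x /[!in_itv] /= /andP[_ x_lt1]; rewrite /phi_y x_lt1.
Qed.

Lemma H_integrand_ge (r p q : R) : 0 <= r <= 1 -> `|p| <= q ->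
  - softplus q <= (1 - r) * p - softplus p.
Proof.
move=> /andP[r0 r1] pq; have [p_ge0|p_lt0] := leP 0 p.
- have sp_le : softplus p <= softplus q.
    by apply: softplus_le; rewrite ger0_norm in pq.
  have : 0 <= (1 - r) * p by apply: mulr_ge0 => //; lra.
  lra.
- have sp_le : softplus (- p) <= softplus q.
    by apply: softplus_le; rewrite ltr0_norm in pq.
  have : p <= (1 - r) * p by nra.
  have := softplusN p; lra.
Qed.

Lemma H_fun_phi_y_ge (rho : R -> R) (a b y C : R) : Mset rho ->
  (forall x, I11 x -> forall p, p = phi_of a \/ p = phi_of b ->
     C <= (1 - rho x) * p - softplus p) ->
  C <= H_fun rho (phi_y a b y).
Proof.
move=> Mrho C_le.
have Iphi : mu.-integrable I11 (EFin \o fun x =>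
    (1 - rho x) * phi_y a b y x - ln (1 + expR (phi_y a b y x))).
  exact: integrable_H_integrand Mrho (measurable_phi_y a b y)
    (fun x _ => phi_y_norm_le a b y x).
have := Rintegral_I11_ge Iphi (c := C); rewrite /H_fun.
suff : forall x, I11 x ->
    C <= (1 - rho x) * phi_y a b y x - ln (1 + expR (phi_y a b y x)).
  by move=> C_le_int /(_ C_le_int); lra.
by move=> x Ix; apply: C_le => //; rewrite /phi_y; case: ifP; [left | right].
Qed.

Definition H_inf (rm rp : R) (rho : R -> R) : R :=
  inf [set H_fun rho (phi_y rm rp y) | y in I11].

Lemma S_ent_add_Vplus (rm rp : R) (rho : R -> R) :
  S_ent rho + Vplus rm rp rho = H_inf rm rp rho - Vbar rm rp.
Proof. rewrite /Vplus /H_inf; lra. Qed.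

Lemma H_fun_phi_y_ge_bottom (rm rp : R) (rho : R -> R) (y : R) : Mset rho ->
  - softplus (Num.max `|phi_of rm| `|phi_of rp|) <= H_fun rho (phi_y rm rp y).
Proof.
move=> Mrho; apply: H_fun_phi_y_ge => // x Ix p [->|->];
  apply: H_integrand_ge; rewrite ?le_max ?lexx ?orbT //; case: Mrho => _; exact.
Qed.

Lemma H_inf_ge (rm rp : R) (rho : R -> R) (C : R) :
  (forall y, I11 y -> C <= H_fun rho (phi_y rm rp y)) -> C <= H_inf rm rp rho.
Proof.
move=> C_le; apply: lb_le_inf; last by move=> _ [y Iy <-]; exact: C_le.
by exists (H_fun rho (phi_y rm rp (-1))), (-1); [exact: I11_N1|].
Qed.

Lemma H_inf_le (rm rp : R) (rho : R -> R) (y : R) : Mset rho -> I11 y ->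
  H_inf rm rp rho <= H_fun rho (phi_y rm rp y).
Proof.
move=> Mrho Iy; apply: ge_inf; last by exists y.
exists (- softplus (Num.max `|phi_of rm| `|phi_of rp|)).
by move=> _ [z _ <-]; exact: H_fun_phi_y_ge_bottom.
Qed.

Lemma H_inf_le_ends (rm rp : R) (rho : R -> R) : Mset rho ->
  H_inf rm rp rho <= vacancy_density rho * phi_of rp - softplus (phi_of rp) /\
  H_inf rm rp rho <= vacancy_density rho * phi_of rm - softplus (phi_of rm).
Proof.
move=> Mrho; split.
- by have := H_inf_le rm rp Mrho (I11_N1 R); rewrite H_fun_phi_y_left H_fun_cst.
- have := H_inf_le rm rp Mrho (I11_1 R).
  by rewrite H_fun_phi_y_right // H_fun_cst.
Qed.

Lemma E_minus_eq (rm rp C : R) :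
  (forall rho, Mset rho -> C <= H_inf rm rp rho) ->
  (exists2 rho, Mset rho & H_inf rm rp rho <= C) ->
  E_minus rm rp = C - Vbar rm rp.
Proof.
move=> C_le [rho0 Mrho0 rho0_le]; rewrite /E_minus.
set E := [set _ | _ in _].
have E_lb : lbound E (C - Vbar rm rp).
  by move=> _ [rho Mrho <-]; rewrite S_ent_add_Vplus lerD2r C_le.
have E_rho0 : E (S_ent rho0 + Vplus rm rp rho0) by exists rho0.
apply/le_anti/andP; split; last exact: lb_le_inf (ex_intro _ _ E_rho0) E_lb.
have := ge_inf (ex_intro _ _ E_lb) E_rho0; rewrite S_ent_add_Vplus; lra.
Qed.

Lemma E_plus_eq (rm rp C : R) :
  (forall rho, Mset rho -> H_inf rm rp rho <= C) ->
  (exists2 rho, Mset rho & C <= H_inf rm rp rho) ->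
  E_plus rm rp = C - Vbar rm rp.
Proof.
move=> le_C [rho0 Mrho0 rho0_ge]; rewrite /E_plus.
set E := [set _ | _ in _].
have E_ub : ubound E (C - Vbar rm rp).
  by move=> _ [rho Mrho <-]; rewrite S_ent_add_Vplus lerD2r le_C.
have E_rho0 : E (S_ent rho0 + Vplus rm rp rho0) by exists rho0.
apply/le_anti/andP; split; first exact: ge_sup (ex_intro _ _ E_rho0) E_ub.
have := ub_le_sup (ex_intro _ _ E_ub) E_rho0; rewrite S_ent_add_Vplus; lra.
Qed.

Lemma H_integrand_attains_bottom (p : R) :
  exists2 c, 0 <= c <= 1 & (1 - c) * p - softplus p = - softplus `|p|.
Proof.
have [p_ge0|p_lt0] := leP 0 p.
- by exists 1; rewrite ?lexx ?ler01 // ger0_norm // subrr mul0r sub0r.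
- exists 0; rewrite ?lexx ?ler01 // ltr0_norm // subr0 mul1r (softplusN p).
  lra.
Qed.

Lemma E_minus_value (rm rp : R) :
  E_minus rm rp = - Vbar rm rp - softplus (Num.max `|phi_of rm| `|phi_of rp|).
Proof.
set p0 := Num.max _ _; rewrite (E_minus_eq (C := - softplus p0)); first lra.
  by move=> rho Mrho; apply: H_inf_ge => y _; exact: H_fun_phi_y_ge_bottom.
have [p0_b|p0_a] : p0 = `|phi_of rp| \/ p0 = `|phi_of rm|.
  by rewrite /p0; case: leP; [left|right].
- have [c c01 c_val] := H_integrand_attains_bottom (phi_of rp).
  exists (fun=> c); first exact: Mset_cst.
  have [+ _] := H_inf_le_ends rm rp (Mset_cst c01).
  by rewrite vacancy_density_cst c_val p0_b.
- have [c c01 c_val] := H_integrand_attains_bottom (phi_of rm).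
  exists (fun=> c); first exact: Mset_cst.
  have [_ +] := H_inf_le_ends rm rp (Mset_cst c01).
  by rewrite vacancy_density_cst c_val p0_a.
Qed.

Lemma E_plus_value_nonpos (rm rp : R) :
  phi_of rm <= phi_of rp -> phi_of rp <= 0 ->
  E_plus rm rp = - Vbar rm rp - softplus (phi_of rp).
Proof.
move=> ab b_le0; rewrite (E_plus_eq (C := - softplus (phi_of rp))); first lra.
  move=> rho Mrho; have [+ _] := H_inf_le_ends rm rp Mrho.
  have /andP[m_ge0 _] := vacancy_density_ge0_le1 Mrho.
  have : vacancy_density rho * phi_of rp <= 0 by rewrite mulr_ge0_le0.
  lra.
have M1 : Mset (fun=> 1 : R) by apply: Mset_cst; rewrite lexx ler01.
exists (fun=> 1) => //; apply: H_inf_ge => y _.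
apply: H_fun_phi_y_ge => // x _ p p_ab.
by rewrite subrr mul0r sub0r lerN2; apply: softplus_le; case: p_ab => ->.
Qed.

Lemma E_plus_value_nonneg (rm rp : R) :
  0 <= phi_of rm -> phi_of rm <= phi_of rp ->
  E_plus rm rp = - Vbar rm rp - softplus (- phi_of rm).
Proof.
move=> a_ge0 ab; rewrite (E_plus_eq (C := - softplus (- phi_of rm))); first lra.
  move=> rho Mrho; have [_ +] := H_inf_le_ends rm rp Mrho.
  have /andP[_ m_le1] := vacancy_density_ge0_le1 Mrho.
  have : vacancy_density rho * phi_of rm <= phi_of rm by rewrite ler_piMl.
  have := softplusN (phi_of rm); lra.
have M0 : Mset (fun=> 0 : R) by apply: Mset_cst; rewrite lexx ler01.
exists (fun=> 0) => //; apply: H_inf_ge => y _.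
apply: H_fun_phi_y_ge => // x _ p p_ab.
have : softplus (- p) <= softplus (- phi_of rm).
  by apply: softplus_le; rewrite lerN2; case: p_ab => ->.
by rewrite subr0 mul1r (softplusN p); lra.
Qed.

Lemma E_plus_value_mixed (rm rp : R) :
  phi_of rm <= 0 <= phi_of rp -> phi_of rm < phi_of rp ->
  E_plus rm rp = - Vbar rm rp + (phi_of rm * softplus (phi_of rp)
                                 - phi_of rp * softplus (phi_of rm))
                                / (phi_of rp - phi_of rm).
Proof.
set a := phi_of rm; set b := phi_of rp; move=> /andP[a_le0 b_ge0] ab.
have ba_gt0 : 0 < b - a by rewrite subr_gt0.
set C := (a * softplus b - b * softplus a) / (b - a).
rewrite (E_plus_eq (C := C)); first lra.
(* C is the (b, -a)-weighted mean of the two affine bounds in the density *)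
  move=> rho Mrho; have [le_b le_a] := H_inf_le_ends rm rp Mrho.
  set v := vacancy_density rho; set H := H_inf rm rp rho.
  have : b * H <= b * (v * a - softplus a) by rewrite ler_wpM2l.
  have : - a * H <= - a * (v * b - softplus b) by rewrite ler_wpM2l // oppr_ge0.
  rewrite /C ler_pdivlMr //; lra.
(* the density equalizing the two affine bounds: the slope of softplus on [a, b] *)
set m := (softplus b - softplus a) / (b - a).
have m_ge0 : 0 <= m.
  by apply: divr_ge0; [rewrite subr_ge0; apply: softplus_le |]; exact: ltW.
have m_le1 : m <= 1.
  rewrite ler_pdivrMr // mul1r (softplusN a) (softplusN b).
  have : softplus (- b) <= softplus (- a).
    by apply: softplus_le; rewrite lerN2 ltW.
  lra.
have Mm : Mset (fun=> 1 - m) by apply: Mset_cst; apply/andP; split; lra.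
have m_C p : p = a \/ p = b -> (1 - (1 - m)) * p - softplus p = C.
  by move=> [->|->]; rewrite /C /m; field; exact: lt0r_neq0.
exists (fun=> 1 - m) => //; apply: H_inf_ge => y _.
by apply: H_fun_phi_y_ge => // x _ p /m_C ->.
Qed.

Lemma phi_of_lt (r1 r2 : R) :
  0 < r1 -> r1 < r2 -> r2 < 1 -> phi_of r1 < phi_of r2.
Proof.
move=> r1_gt0 r12 r2_lt1.
have odds_gt0 (r : R) : 0 < r -> r < 1 -> r / (1 - r) \is Num.pos.
  by move=> r_gt0 r_lt1; rewrite posrE divr_gt0 // subr_gt0.
rewrite /phi_of ltr_ln ?odds_gt0 //; try lra.
rewrite ltr_pdivrMr; last lra.
rewrite mulrAC ltr_pdivlMr; last lra.
nra.
Qed.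

Lemma phi_of_le0 (r : R) : r <= 1 / 2 -> phi_of r <= 0.
Proof. by move=> r_le; rewrite /phi_of ln_le0 // ler_pdivrMr; lra. Qed.

Lemma phi_of_ge0 (r : R) : 1 / 2 <= r -> r < 1 -> 0 <= phi_of r.
Proof. by move=> r_ge r_lt1; rewrite /phi_of ln_ge0 // ler_pdivlMr; lra. Qed.

End CompetitiveTASEPEnergy.

Theorem proposition2p1 (R : realType) (rm rp : R)
  (h0 : 0 < rm) (hmp : rm < rp) (h1 : rp < 1) :
  let phim := phi_of rm in
  let phip := phi_of rp in
  let phi0 := Num.max `|phim| `|phip| in
  E_minus rm rp = - Vbar rm rp - ln (1 + expR phi0) /\
  (rm <= 1 / 2 <= rp ->
     E_plus rm rp = - Vbar rm rp +
       (phim * ln (1 + expR phip) - phip * ln (1 + expR phim)) / (phip - phim)) /\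
  (rp <= 1 / 2 ->
     E_plus rm rp = - Vbar rm rp - ln (1 + expR phip)) /\
  (1 / 2 <= rm ->
     E_plus rm rp = - Vbar rm rp - ln (1 + expR (- phim))).
Proof.
move=> phim phip phi0.
have phi_mp : phim < phip by exact: phi_of_lt.
split; first exact: E_minus_value.
split.
  move=> /andP[rm_le rp_ge]; apply: E_plus_value_mixed => //.
  by rewrite phi_of_le0 // phi_of_ge0.
split.
  by move=> rp_le; apply: E_plus_value_nonpos; [exact: ltW | exact: phi_of_le0].
move=> rm_ge; apply: E_plus_value_nonneg; last exact: ltW.
by apply: phi_of_ge0 => //; lra.
Qed.
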